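(* Let $V$ be an abelian subgroup of a finite group $G$, and let $g\in G$ be an element normalizing $V$ whose order is coprime to $|V|$. Then $$[V,g]=\mathscr E_{V\langle g\rangle}(g)=\mathscr R_{V\langle g\rangle}(g).$$
   Context: Commutators: $a^b=b^{-1}ab$, $[a,b]=a^{-1}b^{-1}ab$, and $[a,{}_nb]=[\dots[[a,b],b],\dots,b]$ with $b$ repeated $n$ times; $[V,g]$ is the subgroup generated by all $[v,g]$, $v\in V$. For a finite group $H$ and $g\in H$, the right Engel sink $\mathscr R_H(g)$ is the smallest set $\mathscr R\subseteq H$ such that for every $x\in H$ there is $r(x)\ge1$ with $[g,{}_nx]\in\mathscr R$ for all $n\ge r(x)$; the left Engel sink $\mathscr E_H(g)$ is the smallest set $\mathscr E\subseteq H$ such that for every $x\in H$ there is $l(x)\ge1$ with $[x,{}_ng]\in\mathscr E$ for all $n\ge l(x)$ (intersections of such sets are again such sets). *)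

From mathcomp Require Import all_boot all_fingroup all_solvable.
Set Implicit Arguments. Unset Strict Implicit. Unset Printing Implicit Defensive.
Local Open Scope group_scope.

Definition commn (gT : finGroupType) (a b : gT) (n : nat) : gT :=
  iter n (fun c => [~ c, b]) a.

Definition left_sink_set (gT : finGroupType) (H : {set gT}) (g : gT)
    (E : {set gT}) : Prop :=
  E \subset H /\
  forall x, x \in H -> exists l, (1 <= l)%N /\
    forall n, (l <= n)%N -> commn x g n \in E.

Definition right_sink_set (gT : finGroupType) (H : {set gT}) (g : gT)
    (R : {set gT}) : Prop :=
  R \subset H /\
  forall x, x \in H -> exists r, (1 <= r)%N /\
    forall n, (r <= n)%N -> commn g x n \in R.

Definition is_left_Engel_sink (gT : finGroupType) (H : {set gT}) (g : gT)
    (E : {set gT}) : Prop :=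
  left_sink_set H g E /\ forall E', left_sink_set H g E' -> E \subset E'.

Definition is_right_Engel_sink (gT : finGroupType) (H : {set gT}) (g : gT)
    (R : {set gT}) : Prop :=
  right_sink_set H g R /\ forall R', right_sink_set H g R' -> R \subset R'.

From mathcomp Require Import all_boot all_fingroup all_solvable.
Set Implicit Arguments. Unset Strict Implicit. Unset Printing Implicit Defensive.
Local Open Scope group_scope.

(* Put U = [V, g].  Since g normalizes the abelian group V and
   #[g] is coprime to #|V|, the map u |-> [u, g] has trivial fixed points on
   [V, <g>] and hence permutes U.  Every x of V<g> is sent into U by one
   commutation with g, and U is stable under commutation with any x of V<g>,
   so U is a left and a right sink set.  Conversely each u in U lies on a
   cycle of u |-> [u, g], which is also the sequence [g, _n vg] for a suitable
   v in U, so u lies in every left and every right sink set. *)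

Lemma mem_eventually_iter_periodic (T : finType) (S : {pred T}) (f : T -> T)
    (E : {pred T}) x :
  {homo f : y / y \in S} -> {in S &, injective f} -> x \in S ->
  (exists l, forall n, (l <= n)%N -> iter n f x \in E) -> x \in E.
Proof.
move=> fS injf Sx [l hl]; set p := fingraph.order f x.
have -> : x = iter (l * p) f x.
  by rewrite iterM iter_fix // (iter_order_in fS injf Sx).
by apply: hl; rewrite leq_pmulr // fingraph.order_gt0.
Qed.

Section Commutators.
Variable gT : finGroupType.
Implicit Types (K : {group gT}) (g v w : gT).

Lemma commg_inj_in K g : 'C_K[g] = 1 -> {in K &, injective (commg^~ g)}.
Proof.
move=> tiKg u w Ku Kw /=; rewrite !commgEl => eq_uw.
have ugE : u ^ g = u * (w^-1 * w ^ g) by rewrite -eq_uw mulKVg.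
have Cuw : u * w^-1 \in 'C_K[g].
  rewrite inE groupM ?groupV //=; apply/cent1P/commgP/conjg_fixP.
  by rewrite conjMg conjVg ugE mulgA mulgK.
by apply/eqP; move: Cuw; rewrite tiKg inE [u == w]eq_mulgV1.
Qed.

Lemma commgMl_commute v w g : commute w v -> [~ w, v * g] = [~ w, g].
Proof. by move/commgP/eqP=> cwv; rewrite commgMJ cwv conj1g mulg1. Qed.

End Commutators.

Section EngelSinksOfCoprimeAction.
Variables (gT : finGroupType) (V : {group gT}) (g : gT).
Hypotheses (abV : abelian V) (nVg : g \in 'N(V)) (coVg : coprime #[g] #|V|).

Let U := [~: V, [set g]].
Let H := V <*> <[g]>.

Lemma joing_cycle_id : g \in H.
Proof. by rewrite (subsetP (joing_subr _ _)) ?cycle_id. Qed.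

Lemma commVg_sub_commVcycle : U \subset [~: V, <[g]>].
Proof. by apply: commgSS => //; rewrite sub1set cycle_id. Qed.

Lemma commVg_subV : U \subset V.
Proof.
by apply: subset_trans commVg_sub_commVcycle _; rewrite commg_subl cycle_subG.
Qed.

Lemma commVg_subH : U \subset H.
Proof. exact: subset_trans commVg_subV (joing_subl _ _). Qed.

Lemma commVg_norm : g \in 'N(U).
Proof.
rewrite inE /U -genJ gen_subG.
apply/subsetP=> _ /imsetP[_ /imset2P[v _ Vv /set1P-> ->] ->].
by rewrite conjRg [g ^ g]conjgE mulKg mem_commg ?set11 ?memJ_norm.
Qed.

Lemma commVg_normH : H \subset 'N(U).
Proof.
by rewrite join_subG cycle_subG commVg_norm sub_abelian_norm ?commVg_subV.
Qed.

Lemma commg_mem_commVg x : x \in H -> [~ x, g] \in U.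
Proof.
rewrite /H norm_joinEr ?cycle_subG // => /mulsgP[v k Vv /cycleP[i ->] ->].
rewrite commMgJ.
have /commgP/eqP-> : commute (g ^+ i) g by apply: commute_sym; apply: commuteX.
rewrite mulg1 memJ_norm ?mem_commg ?set11 //.
by rewrite groupX ?commVg_norm.
Qed.

Lemma commg_mem_commVgr u x : u \in U -> x \in H -> [~ u, x] \in U.
Proof.
move=> Uu Hx; have Nx := subsetP commVg_normH x Hx.
by rewrite commgEl groupM ?groupV ?memJ_norm.
Qed.

Lemma commVg_commg_homo : {homo commg^~ g : u / u \in U}.
Proof. by move=> u /(subsetP commVg_subH)/commg_mem_commVg. Qed.

Lemma commVg_commg_inj : {in U &, injective (commg^~ g)}.
Proof.
have tiVg : 'C_[~: V, <[g]>][g] = 1.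
  by rewrite -cent_cycle coprime_abel_cent_TI ?cycle_subG // coprime_sym.
move=> u w /(subsetP commVg_sub_commVcycle) + /(subsetP commVg_sub_commVcycle).
exact: commg_inj_in.
Qed.

Lemma commnl_mem_commVg x n : x \in H -> commn x g n.+1 \in U.
Proof.
move=> Hx; elim: n => [|n IH]; first exact: commg_mem_commVg.
exact: commVg_commg_homo.
Qed.

Lemma commn_mem_commVg u n : u \in U -> commn u g n \in U.
Proof. by move=> Uu; elim: n => //= n; exact: commVg_commg_homo. Qed.

Lemma commnr_mem_commVg x n : x \in H -> commn g x n.+1 \in U.
Proof.
move=> Hx; elim: n => [|n IH]; last exact: commg_mem_commVgr.
by rewrite /commn /= -invgR groupV commg_mem_commVg ?joing_cycle_id.
Qed.

(* The element v g is chosen so that [g, v g] = u; from then on the factor v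
   commutes with every term of the sequence, which lies in V. *)
Lemma commnr_commVg_shift u :
  u \in U -> exists2 x, x \in H & forall n, commn g x n.+1 = commn u g n.
Proof.
move=> Uu; have Uu' : (u ^ g^-1)^-1 \in U.
  by rewrite groupV memJ_norm ?groupV ?commVg_norm.
set v := finv (commg^~ g) (u ^ g^-1)^-1.
have Uv : v \in U by apply: finv_in Uu'; exact: commVg_commg_homo.
have vgE : [~ v, g] = (u ^ g^-1)^-1.
  exact: f_finv_in commVg_commg_homo commVg_commg_inj _ Uu'.
have Vv := subsetP commVg_subV v Uv.
exists (v * g); first by rewrite groupM ?joing_cycle_id ?(subsetP (joing_subl _ _)).
elim=> [|n IH]; first by rewrite /commn /= commgMJ commgg mul1g -invgR vgE invgK conjgKV.
have Vw : commn u g n \in V by rewrite (subsetP commVg_subV) ?commn_mem_commVg.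
rewrite -[LHS]/[~ commn g (v * g) n.+1, v * g] IH commgMl_commute //.
exact: (centsP abV).
Qed.

Lemma left_sink_commVg : left_sink_set H g U.
Proof.
split; first exact: commVg_subH.
by move=> x Hx; exists 1%N; split=> // -[|n] // _; exact: commnl_mem_commVg.
Qed.

Lemma right_sink_commVg : right_sink_set H g U.
Proof.
split; first exact: commVg_subH.
by move=> x Hx; exists 1%N; split=> // -[|n] // _; exact: commnr_mem_commVg.
Qed.

Lemma left_sink_commVg_min E : left_sink_set H g E -> U \subset E.
Proof.
move=> [_ sinkE]; apply/subsetP=> u Uu.
have [l [_ hl]] := sinkE u (subsetP commVg_subH u Uu).
apply: (mem_eventually_iter_periodic commVg_commg_homo commVg_commg_inj Uu).
by exists l.
Qed.

Lemma right_sink_commVg_min R : right_sink_set H g R -> U \subset R.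
Proof.
move=> [_ sinkR]; apply/subsetP=> u Uu.
have [x Hx commnE] := commnr_commVg_shift Uu.
have [r [_ hr]] := sinkR x Hx.
apply: (mem_eventually_iter_periodic commVg_commg_homo commVg_commg_inj Uu).
by exists r => n le_rn; rewrite -[iter _ _ _]commnE hr ?(leq_trans le_rn).
Qed.

End EngelSinksOfCoprimeAction.

Theorem lemma3p2 (gT : finGroupType) (G V : {group gT}) (g : gT) :
  V \subset G -> abelian V -> g \in G -> g \in 'N(V) ->
  coprime #[g] #|V| ->
  is_left_Engel_sink (V <*> <[g]>) g [~: V, [set g]] /\
  is_right_Engel_sink (V <*> <[g]>) g [~: V, [set g]].
Proof.
move=> _ abV _ nVg coVg; split.
- split; first exact: left_sink_commVg.
  exact: left_sink_commVg_min.
- split; first exact: right_sink_commVg.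
  exact: right_sink_commVg_min.
Qed.
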